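(* Assume the setting below and that $M_i(1)\ge M_i(0)$ for all $1\le i\le n$. Fix $\boldsymbol\delta\in\mathbb R^n$, $\alpha\in(0,1)$ and $\beta\in(0,\alpha)$. Let $\hat M$ be an integer-valued statistic with $\mathbb P\big(\sum_{i=1}^n M_i(0)\le\hat M\big)\ge1-\beta$. Let $n_{11}=\sum_iZ_iM_i$, $n_{01}=\sum_i(1-Z_i)M_i$ and $\underline m=n_{11}+n_{01}-\hat M$. For each control unit $j$ let $w_j=Y_j$ if $M_j=1$ and $w_j=+\infty$ if $M_j=0$. For each $i$ with $Z_i=M_i=1$ let $A_i=\sum_{j:Z_j=0}\psi_{i,j}(+\infty,w_j)$, $B_i=\sum_{j:Z_j=0}\psi_{i,j}(Y_i-\delta_i,w_j)$ and $D_i=\phi(A_i)-\phi(B_i)$, and order these units as $l_1,\dots,l_{n_{11}}$ so that $D_{l_1}\le\dots\le D_{l_{n_{11}}}$. Let $L^\ast=\{l_1,\dots,l_{m^\ast}\}$ with $m^\ast=\max\{0,\min\{\underline m,n_{11}\}\}$. Define $\tilde{\boldsymbol Y}\in\overline{\mathbb R}^n$ by $\tilde Y_i=+\infty$ if $Z_i=M_i=1$ and $i\in L^\ast$; $\tilde Y_i=Y_i-\delta_i$ if $Z_i=M_i=1$ and $i\notin L^\ast$; $\tilde Y_i=+\infty$ if $Z_i=1,M_i=0$; $\tilde Y_i=Y_i$ if $Z_i=0,M_i=1$; $\tilde Y_i=+\infty$ if $Z_i=0,M_i=0$. Let $$p=G_{\mathrm R,\phi}\big(t_{\mathrm R,\phi}(\boldsymbol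 Z,\tilde{\boldsymbol Y})\big)+\beta,$$ where $t_{\mathrm R,\phi}$ is the Mann–Whitney-type statistic. Then, if $H_{\boldsymbol\delta}:\boldsymbol\tau=\boldsymbol\delta$ holds, $\mathbb P(p\le\alpha)\le\alpha$.
   Context: There are $n$ units. Unit $i$ has fixed potential outcomes $Y_i^\star(0),Y_i^\star(1)\in\mathbb R$ and fixed potential missingness indicators $M_i(0),M_i(1)\in\{0,1\}$; $\tau_i=Y_i^\star(1)-Y_i^\star(0)$, $\boldsymbol\tau=(\tau_1,\dots,\tau_n)^\intercal$. The assignment $\boldsymbol Z\in\{0,1\}^n$ is drawn from a completely randomized experiment (CRE): for fixed positive integers $n_1,n_0$, $n_1+n_0=n$, $\boldsymbol Z$ is uniform over vectors in $\{0,1\}^n$ with exactly $n_1$ ones, independently of all potential outcomes and missingness indicators; probabilities are over $\boldsymbol Z$. Observed missingness $M_i=Z_iM_i(1)+(1-Z_i)M_i(0)$; the realized outcome $Z_iY_i^\star(1)+(1-Z_i)Y_i^\star(0)$ is observed, and denoted $Y_i$, only when $M_i=1$. The statistic $\hat M$ is a function of the observed data. $\overline{\mathbb R}=\mathbb R\cup\{\pm\infty\}$; $\psi_{i,j}(y,y')=\mathbf 1\{y>y'\}+\mathbf 1\{y=y'\}\mathbf 1\{i\ge j\}$ for $y,y'\in\overline{\mathbb R}$. $\phi$ is a fixed nondecreasing real function on the nonnegative integers. The Mann–Whitney-type statistic is $t_{\mathrm R,\phi}(\boldsymbol z,\boldsymbol y)=\sum_{i=1}^n z_i\phi\big(\sum_{j=1}^n(1-z_j)\psi_{i,j}(y_i,y_j)\big)$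 for $\boldsymbol z\in\{0,1\}^n,\boldsymbol y\in\overline{\mathbb R}^n$. $G_{\mathrm R,\phi}(c)=\mathbb P(t_{\mathrm R,\phi}(\boldsymbol A,\boldsymbol y_0)\ge c)$ with $\boldsymbol A$ from the CRE and $\boldsymbol y_0\in\mathbb R^n$ any fixed vector (independent of $\boldsymbol y_0$). Ties among the $D_i$ may be broken arbitrarily. *)

From HB Require Import structures.
From mathcomp Require Import all_boot all_order all_algebra.
From mathcomp Require Import reals constructive_ereal.
Set Implicit Arguments. Unset Strict Implicit. Unset Printing Implicit Defensive.
Import Order.TTheory GRing.Theory Num.Theory.
Local Open Scope ring_scope.

(* Assignments z : {ffun 'I_n -> bool}; units are indexed 0..n-1 (order preserved). *)
Definition cre (n n1 : nat) (z : {ffun 'I_n -> bool}) : bool :=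
  #|[set i | z i]| == n1.

Definition prob (R : realType) (n n1 : nat) (E : pred {ffun 'I_n -> bool}) : R :=
  (#|[set z : {ffun 'I_n -> bool} | cre n1 z && E z]|%:R) / (#|[set z : {ffun 'I_n -> bool} | cre n1 z]|%:R).

Arguments prob {R n} n1 E.

Definition psi (R : realType) (n : nat) (i j : 'I_n) (y y' : \bar R) : nat :=
  ((y' < y)%E : nat) + ((y == y') && (j <= i)%N : nat).

Definition tR (R : realType) (n : nat) (phi : nat -> R)
  (z : {ffun 'I_n -> bool}) (y : 'I_n -> \bar R) : R :=
  \sum_(i < n | z i) phi (\sum_(j < n | ~~ z j) psi i j (y i) (y j))%N.

Definition GR (R : realType) (n n1 : nat) (phi : nat -> R) (y0 : 'I_n -> R) (c : R) : R :=
  prob n1 (fun a => c <= tR phi a (fun i => (y0 i)%:E)).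

Definition Mobs (n : nat) (M1 M0 : 'I_n -> bool) (z : {ffun 'I_n -> bool}) :
  {ffun 'I_n -> bool} := [ffun i => if z i then M1 i else M0 i].

Definition Yreal (R : realType) (n : nat) (Y1 Y0 : 'I_n -> R) (z : {ffun 'I_n -> bool})
  (i : 'I_n) : R := if z i then Y1 i else Y0 i.

Definition Yobs (R : realType) (n : nat) (Y1 Y0 : 'I_n -> R) (M1 M0 : 'I_n -> bool)
  (z : {ffun 'I_n -> bool}) (i : 'I_n) : option R :=
  if Mobs M1 M0 z i then Some (Yreal Y1 Y0 z i) else None.

Definition wv (R : realType) (n : nat) (Y1 Y0 : 'I_n -> R) (M1 M0 : 'I_n -> bool)
  (z : {ffun 'I_n -> bool}) (j : 'I_n) : \bar R :=
  if Mobs M1 M0 z j then (Yreal Y1 Y0 z j)%:E else +oo%E.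

Definition Acnt (R : realType) (n : nat) (Y1 Y0 : 'I_n -> R) (M1 M0 : 'I_n -> bool)
  (z : {ffun 'I_n -> bool}) (i : 'I_n) : nat :=
  \sum_(j < n | ~~ z j) psi i j +oo%E (wv Y1 Y0 M1 M0 z j).

Definition Bcnt (R : realType) (n : nat) (Y1 Y0 : 'I_n -> R) (M1 M0 : 'I_n -> bool)
  (delta : 'I_n -> R) (z : {ffun 'I_n -> bool}) (i : 'I_n) : nat :=
  \sum_(j < n | ~~ z j) psi i j ((Yreal Y1 Y0 z i - delta i)%:E) (wv Y1 Y0 M1 M0 z j).

Definition Dval (R : realType) (n : nat) (phi : nat -> R) (Y1 Y0 : 'I_n -> R)
  (M1 M0 : 'I_n -> bool) (delta : 'I_n -> R) (z : {ffun 'I_n -> bool}) (i : 'I_n) : R :=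
  phi (Acnt Y1 Y0 M1 M0 z i) - phi (Bcnt Y1 Y0 M1 M0 delta z i).

Definition n11 (n : nat) (M1 M0 : 'I_n -> bool) (z : {ffun 'I_n -> bool}) : nat :=
  #|[set i | z i && Mobs M1 M0 z i]|.
Definition n01 (n : nat) (M1 M0 : 'I_n -> bool) (z : {ffun 'I_n -> bool}) : nat :=
  #|[set i | ~~ z i && Mobs M1 M0 z i]|.

Definition mstar (n : nat) (M1 M0 : 'I_n -> bool) (z : {ffun 'I_n -> bool}) (mhat : int) : int :=
  Num.max 0 (Num.min ((n11 M1 M0 z + n01 M1 M0 z)%:Z - mhat) (n11 M1 M0 z)%:Z).

Definition Lstar (n : nat) (M1 M0 : 'I_n -> bool) (z : {ffun 'I_n -> bool}) (mhat : int)
  (ord : seq 'I_n) : seq 'I_n := take `|mstar M1 M0 z mhat|%N ord.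

Definition Ytilde (R : realType) (n : nat) (Y1 Y0 : 'I_n -> R) (M1 M0 : 'I_n -> bool)
  (delta : 'I_n -> R) (z : {ffun 'I_n -> bool}) (L : seq 'I_n) (i : 'I_n) : \bar R :=
  if z i then
    (if Mobs M1 M0 z i then
       (if i \in L then +oo%E else (Yreal Y1 Y0 z i - delta i)%:E)
     else +oo%E)
  else
    (if Mobs M1 M0 z i then (Yreal Y1 Y0 z i)%:E else +oo%E).

(* Let [Y0oo] be the fixed vector of control outcomes, set to +oo where the
   control outcome would be missing.  As [tR] depends on its argument only
   through ranks (ties broken by index), [GR] of the oracle statistic
   [tR Z Y0oo] is an exact permutation p-value, hence super-uniform.  Under
   the null, [Y1 - delta = Y0], so both the oracle and the observed statistic
   equal the sum of [phi A_i] over the treated units minus the sum of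
   [D_i >= 0] over the treated units kept finite: those with [M0] for the
   oracle, those with [M1] outside [L*] for [Ytilde].  When [Mhat >= sum M0],
   [m*] is at most the number of treated units with [M0 < M1], and [L*]
   consists of units of smallest [D], so the observed statistic is the
   smaller one.  A union bound with the event [Mhat < sum M0], of probability
   at most [beta], concludes. *)
From HB Require Import structures.
From mathcomp Require Import all_boot all_order all_algebra.
From mathcomp Require Import reals constructive_ereal.
From mathcomp Require Import fingroup perm zify lra.
Set Implicit Arguments. Unset Strict Implicit. Unset Printing Implicit Defensive.
Import Order.TTheory GRing.Theory Num.Theory.
Local Open Scope ring_scope.

Section FiniteProbability.
Context {R : realType} (n n1 : nat).
Implicit Types (E F G : pred {ffun 'I_n -> bool}).

Local Notation prob := (prob (R := R) n1).

Lemma le_prob E F : (forall z, cre n1 z -> E z -> F z) -> prob E <= prob F.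
Proof.
move=> EF; rewrite /prob ler_wpM2r ?invr_ge0 ?ler0n // ler_nat.
apply/subset_leq_card/subsetP => z; rewrite !inE => /andP[cz Ez].
by rewrite cz EF.
Qed.

Lemma le_prob_or E F G : (forall z, cre n1 z -> E z -> F z || G z) ->
  prob E <= prob F + prob G.
Proof.
move=> EFG; rewrite /prob -mulrDl ler_wpM2r ?invr_ge0 ?ler0n // -natrD ler_nat.
apply: leq_trans (leq_card_setU _ _); apply/subset_leq_card/subsetP => z.
by rewrite !inE => /andP[cz /(EFG z cz)]; rewrite cz.
Qed.

Lemma prob_not E : prob (fun z => ~~ E z) <= 1 - prob E.
Proof.
rewrite lerBrDr /prob -mulrDl -natrD.
set N := #|[set z | cre n1 z]|.
have -> : (#|[set z | cre n1 z && ~~ E z]| + #|[set z | cre n1 z && E z]|)%N = N.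
  rewrite /N -(cardsID [set z | E z] [set z | cre n1 z]) addnC.
  by congr (_ + _)%N; apply/eq_card => z; rewrite !inE // andbC.
have [->|N0] := eqVneq N 0%N; first by rewrite mul0r.
by rewrite divff ?pnatr_eq0.
Qed.

Lemma prob_pvalue_le (T : {ffun 'I_n -> bool} -> R) (g : R) : 0 <= g ->
  prob (fun z => prob (fun a => T z <= T a) <= g) <= g.
Proof.
move=> g0; set P := fun z => cre n1 z && (prob (fun a => T z <= T a) <= g).
have [z0 Pz0|P0] := pickP P; last first.
  rewrite /prob (_ : #|_| = 0%N) ?mul0r //.
  by apply: eq_card0 => z; rewrite inE; apply: P0.
(* The event is contained in [{a | T zm <= T a}] for a minimiser [zm] of [T] on it. *)
have [zm /andP[_ pzm] zm_min] := arg_minP T Pz0.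
apply: le_trans pzm; apply: le_prob => z cz pz.
by apply: zm_min; rewrite /P cz.
Qed.

End FiniteProbability.

Section RankTransform.
Variables (R : realType) (n : nat) (y : 'I_n -> \bar R).

Definition rank_le (j i : 'I_n) : bool :=
  (y j < y i)%E || ((y i == y j) && (j <= i)%N).

Lemma psi_rank_le i j : psi i j (y i) (y j) = rank_le j i.
Proof. by rewrite /psi /rank_le; case: ltgtP. Qed.

Lemma rank_le_refl : reflexive rank_le.
Proof. by move=> i; rewrite /rank_le eqxx leqnn orbT. Qed.

Lemma rank_le_total : total rank_le.
Proof.
move=> i j; rewrite /rank_le.
by case: (ltgtP (y i) (y j)) => //= _; rewrite leq_total.
Qed.

Lemma rank_le_anti : antisymmetric rank_le.
Proof.
move=> i j; rewrite /rank_le; case: (ltgtP (y i) (y j)) => //= _.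
by move=> /andP[ij ji]; apply/val_inj/anti_leq; rewrite ij ji.
Qed.

Lemma rank_le_trans : transitive rank_le.
Proof.
move=> b a c; rewrite /rank_le.
move=> /orP[ab|/andP[/eqP eba ab]] /orP[bc|/andP[/eqP ecb bc]].
- by rewrite (lt_trans ab bc).
- by rewrite ecb ab.
- by rewrite -eba bc.
- by rewrite ecb eba eqxx (leq_trans ab bc) orbT.
Qed.

Definition rank (i : 'I_n) : nat := #|[set j | rank_le j i]|.

Lemma rank_gt0 i : (0 < rank i)%N.
Proof. by apply/card_gt0P; exists i; rewrite inE rank_le_refl. Qed.

Lemma rank_leq_card i : (rank i <= n)%N.
Proof. by rewrite -[leqRHS]card_ord max_card. Qed.

Lemma rank_leE j i : rank_le j i = (rank j <= rank i)%N.
Proof.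
apply/idP/idP => [ji|].
  apply/subset_leq_card/subsetP => k; rewrite !inE => kj.
  exact: rank_le_trans kj ji.
apply: contraLR => Nji; rewrite -ltnNge.
have ij : rank_le i j by have := rank_le_total i j; rewrite (negbTE Nji) orbF.
apply/proper_card/properP; split.
  by apply/subsetP => k; rewrite !inE => ki; apply: rank_le_trans ki ij.
by exists j; rewrite !inE ?rank_le_refl.
Qed.

Lemma rank_inj : injective rank.
Proof. by move=> i j eij; apply: rank_le_anti; rewrite !rank_leE eij leqnn. Qed.

Lemma rank_pred_lt i : ((rank i).-1 < n)%N.
Proof. by rewrite (leq_trans _ (rank_leq_card i)) // ltn_predL rank_gt0. Qed.

Definition rank_ord (i : 'I_n) : 'I_n := Ordinal (rank_pred_lt i).

Lemma rank_ord_inj : injective rank_ord.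
Proof.
move=> i j /(congr1 val) /= eij; apply: rank_inj.
by have := rank_gt0 i; have := rank_gt0 j; lia.
Qed.

Definition rank_perm : {perm 'I_n} := perm rank_ord_inj.

Lemma rank_le_perm j i : rank_le j i = (rank_perm j <= rank_perm i)%N.
Proof.
rewrite !permE /= rank_leE.
by have := rank_gt0 i; have := rank_gt0 j; lia.
Qed.

End RankTransform.

Section NullDistribution.
Context {R : realType} {n : nat} (n1 : nat) (phi : nat -> R).

Local Notation prob := (prob (R := R)).

Definition tR_ranks (w : {ffun 'I_n -> bool}) : R :=
  \sum_(k < n | w k) phi (\sum_(l < n | ~~ w l) (l <= k)%N : nat)%N.

Lemma tR_rank_perm (y : 'I_n -> \bar R) z :
  tR phi z y = tR_ranks [ffun k => z ((rank_perm y)^-1%g k)].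
Proof.
rewrite /tR_ranks (reindex_inj (@perm_inj _ (rank_perm y))).
apply: eq_big => [i|i _]; first by rewrite ffunE permK.
congr (phi _); rewrite [RHS](reindex_inj (@perm_inj _ (rank_perm y))).
apply: eq_big => [j|j _]; first by rewrite ffunE permK.
by rewrite psi_rank_le rank_le_perm.
Qed.

Lemma prob_relabel (s : {perm 'I_n}) (E : pred {ffun 'I_n -> bool}) :
  prob n1 (fun z => E [ffun k => z (s k)]) = prob n1 E.
Proof.
pose relabel (z : {ffun 'I_n -> bool}) : {ffun 'I_n -> bool} := [ffun k => z (s k)].
have relabel_inj : injective relabel.
  move=> a b /ffunP eab; apply/ffunP => k.
  by have := eab (s^-1%g k); rewrite !ffunE permKV.
have cre_relabel z : cre n1 (relabel z) = cre n1 z.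
  rewrite /cre -!sum1dep_card (reindex_inj (@perm_inj _ s^-1%g)).
  by congr (_ == _); apply: eq_bigl => k; rewrite ffunE permKV.
rewrite /prob -!sum1dep_card.
rewrite [in RHS](reindex_inj relabel_inj).
by congr (_%:R / _); apply: eq_bigl => z; rewrite cre_relabel.
Qed.

Lemma prob_tR_ranks (y : 'I_n -> \bar R) c :
  prob n1 (fun a => c <= tR phi a y) = prob n1 (fun a => c <= tR_ranks a).
Proof.
rewrite -[RHS](prob_relabel (rank_perm y)^-1%g) /prob.
by congr (_%:R / _); apply: eq_card => a; rewrite !inE tR_rank_perm.
Qed.

Lemma GR_prob (y0 : 'I_n -> R) (y : 'I_n -> \bar R) c :
  GR n1 phi y0 c = prob n1 (fun a => c <= tR phi a y).
Proof. by rewrite /GR !prob_tR_ranks. Qed.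

End NullDistribution.

Lemma ler_sum_card (R : numDomainType) (T : finType) (D : T -> R) (P Q : {set T}) :
  (#|P| <= #|Q|)%N -> {in P & Q, forall i j, D i <= D j} -> {in Q, forall j, 0 <= D j} ->
  \sum_(i in P) D i <= \sum_(j in Q) D j.
Proof.
move Pk : #|P| => k; elim: k P Q Pk => [|k IH] P Q Pk PQ leD D0.
  by move/eqP: Pk; rewrite cards_eq0 => /eqP ->; rewrite big_set0 sumr_ge0.
have /card_gt0P[i iP] : (0 < #|P|)%N by rewrite Pk.
have /card_gt0P[j jQ] : (0 < #|Q|)%N by rewrite (leq_trans _ PQ).
rewrite (big_setD1 i iP) (big_setD1 j jQ) lerD ?leD //.
apply: IH.
- by move: Pk; rewrite (cardsD1 i P) iP => -[].
- by move: PQ; rewrite (cardsD1 j Q) jQ.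
- by move=> a b /setD1P[_ aP] /setD1P[_ bQ]; apply: leD.
- by move=> b /setD1P[_ bQ]; apply: D0.
Qed.

Lemma card_setI_leq_setD (T : finType) (L X K : {set T}) :
  K :&: L = L :\: X -> (#|L| <= #|K|)%N -> (#|L :&: X| <= #|K :\: L|)%N.
Proof. by move=> KL LK; have := cardsID X L; have := cardsID L K; rewrite KL; lia. Qed.

Lemma sorted_take_drop (T : eqType) (r : rel T) (s : seq T) m x y :
  transitive r -> sorted r s -> x \in take m s -> y \in drop m s -> r x y.
Proof.
move=> r_tr; rewrite (sorted_pairwise r_tr) -[in pairwise _ _](cat_take_drop m s).
by rewrite pairwise_cat => /and3P[/allrelP xy _ _]; apply: xy.
Qed.

Lemma psi_le_pinfty (R : realType) n (i j : 'I_n) (x : R) (w : \bar R) :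
  (psi i j x%:E w <= psi i j +oo%E w)%N.
Proof.
rewrite /psi; case: w => [r||] //=.
- by rewrite ltry lte_fin eqe; case: ltgtP => //= _; case: (j <= i)%N.
- by rewrite ltNyr.
Qed.

Definition Y0oo (R : realType) n (Y0 : 'I_n -> R) (M0 : 'I_n -> bool) (i : 'I_n) : \bar R :=
  if M0 i then (Y0 i)%:E else +oo%E.

Lemma MobsE n (M1 M0 : 'I_n -> bool) (z : {ffun 'I_n -> bool}) i :
  Mobs M1 M0 z i = if z i then M1 i else M0 i.
Proof. exact: ffunE. Qed.

Section Imputation.
Variables (R : realType) (n : nat) (Y1 Y0 : 'I_n -> R) (M1 M0 : 'I_n -> bool).
Variables (phi : nat -> R) (delta : 'I_n -> R) (z : {ffun 'I_n -> bool}).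

Local Notation D := (Dval phi Y1 Y0 M1 M0 delta z).
Local Notation A i := (phi (Acnt Y1 Y0 M1 M0 z i)).

Lemma tR_impute (y : 'I_n -> \bar R) (c : pred 'I_n) :
  (forall j, ~~ z j -> y j = wv Y1 Y0 M1 M0 z j) ->
  (forall i, z i -> y i = if c i then (Yreal Y1 Y0 z i - delta i)%:E else +oo%E) ->
  tR phi z y = \sum_(i | z i) A i - \sum_(i | z i && c i) D i.
Proof.
move=> y_ctrl y_trt; rewrite big_mkcondr -sumrB; apply: eq_bigr => i zi.
rewrite (eq_bigr _ (fun j zj => congr1 (psi i j (y i)) (y_ctrl j zj))) y_trt //.
by case: (c i); rewrite ?subr0 // /Dval subKr.
Qed.

Lemma tR_Ytilde L :
  tR phi z (Ytilde Y1 Y0 M1 M0 delta z L) =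
  \sum_(i | z i) A i - \sum_(i | z i && (M1 i && (i \notin L))) D i.
Proof.
apply: tR_impute => [j zj|i zi]; first by rewrite /Ytilde /wv (negbTE zj).
by rewrite /Ytilde MobsE zi; case: (M1 i) (i \in L) => [] [].
Qed.

Hypothesis null_delta : forall i, Y1 i - Y0 i = delta i.

Lemma tR_Y0oo :
  tR phi z (Y0oo Y0 M0) = \sum_(i | z i) A i - \sum_(i | z i && M0 i) D i.
Proof.
apply: tR_impute => [j zj|i zi].
  by rewrite /Y0oo /wv /Yreal MobsE (negbTE zj).
by rewrite /Y0oo /Yreal zi; case: (M0 i) => //; rewrite -null_delta subKr.
Qed.

Hypothesis M0_le_M1 : forall i, (M0 i <= M1 i)%N.
Hypothesis phi_homo : {homo phi : a b / (a <= b)%N >-> a <= b}.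

Lemma Dval_ge0 i : 0 <= D i.
Proof.
rewrite subr_ge0; apply/phi_homo/leq_sum => j _; exact: psi_le_pinfty.
Qed.

Lemma mstar_le_card (mhat : int) :
  (\sum_(i < n) (M0 i : nat))%:Z <= mhat ->
  (`|mstar M1 M0 z mhat| <= #|[set i | z i && M1 i && ~~ M0 i]|)%N.
Proof.
set K := [set i | z i && M1 i && ~~ M0 i].
have n11E : n11 M1 M0 z = (#|[set i | z i && M0 i]| + #|K|)%N.
  rewrite /n11 -(cardsID [set i | M0 i]); congr (_ + _)%N; apply/eq_card => i;
  by rewrite !inE MobsE; case: (z i) (M0 i) (M1 i) (M0_le_M1 i) => [] [] [].
have sumM0 : (\sum_(i < n) (M0 i : nat) = #|[set i | z i && M0 i]| + n01 M1 M0 z)%N.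
  rewrite (_ : \sum_(i < n) _ = #|[set i | M0 i]|); last first.
    by rewrite -sum1dep_card [RHS]big_mkcond; apply: eq_bigr => i _; case: (M0 i).
  rewrite /n01 -(cardsID [set i | z i]); congr (_ + _)%N; apply/eq_card => i;
  by rewrite !inE ?MobsE; case: (z i); rewrite ?andbF ?andbT.
by rewrite /mstar sumM0 n11E => ?; lia.
Qed.

Variable ord : seq 'I_n.
Hypothesis ord_perm : perm_eq ord [seq i <- enum 'I_n | z i && Mobs M1 M0 z i].
Hypothesis ord_sorted : sorted (fun a b => D a <= D b) ord.

Lemma mem_ord i : (i \in ord) = z i && M1 i.
Proof.
by rewrite (perm_mem ord_perm) mem_filter mem_enum andbT MobsE; case: (z i).
Qed.

Lemma ord_uniq : uniq ord.
Proof. by rewrite (perm_uniq ord_perm) filter_uniq ?enum_uniq. Qed.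

Lemma size_ord : size ord = n11 M1 M0 z.
Proof.
rewrite -(card_uniqP ord_uniq) /n11; apply: eq_card => i.
by rewrite inE (perm_mem ord_perm) mem_filter mem_enum andbT.
Qed.

(* [take m ord] holds [m] treated units of smallest [D]; those among them with
   [M0] are at most as many as the treated units with [M1 && ~~ M0] outside
   it, whose [D] is no smaller. *)
Lemma sum_Dval_le m :
  (m <= #|[set i | z i && M1 i && ~~ M0 i]|)%N -> (m <= size ord)%N ->
  \sum_(i | z i && M0 i) D i <= \sum_(i | z i && (M1 i && (i \notin take m ord))) D i.
Proof.
move=> mK m_ord; set L := take m ord.
have L_trt i : i \in L -> z i && M1 i by move/mem_take; rewrite mem_ord.
rewrite (bigID (mem L)) [leRHS](bigID M0) /= addrC.
have -> : \sum_(i | z i && M0 i && (i \notin L)) D i =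
          \sum_(i | z i && (M1 i && (i \notin L)) && M0 i) D i.
  by apply: eq_bigl => i; case: (z i) (M0 i) (M1 i) (i \in L) (M0_le_M1 i) => [] [] [] [].
rewrite lerD2l.
set LS := [set i in L]; set X := [set i | M0 i]; set K := [set i | z i && M1 i && ~~ M0 i].
have -> : \sum_(i | z i && M0 i && (i \in L)) D i = \sum_(i in LS :&: X) D i.
  apply: eq_bigl => i; rewrite !inE andbC.
  by case/boolP: (i \in L) => [/L_trt/andP[-> _]|]; rewrite ?andbT.
have -> : \sum_(i | z i && (M1 i && (i \notin L)) && ~~ M0 i) D i = \sum_(i in K :\: LS) D i.
  by apply: eq_bigl => i; rewrite !inE; case: (z i) (M0 i) (M1 i) (i \in L) => [] [] [] [].
apply: ler_sum_card => [|i j|j _]; last exact: Dval_ge0.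
- apply: card_setI_leq_setD.
    apply/setP => i; rewrite !inE; case/boolP: (i \in L) => [/L_trt/andP[-> ->]|]; by rewrite ?andbF.
  by rewrite cardsE (card_uniqP (take_uniq m ord_uniq)) size_takel.
- rewrite !inE => /andP[iL _] /andP[jL /andP[/andP[zj M1j] _]].
  apply: (sorted_take_drop _ ord_sorted iL); first by move=> b a c; apply: le_trans.
  have : j \in take m ord ++ drop m ord by rewrite cat_take_drop mem_ord zj M1j.
  by rewrite mem_cat (negbTE jL).
Qed.

Lemma tR_Ytilde_Lstar_le (mhat : int) :
  (\sum_(i < n) (M0 i : nat))%:Z <= mhat ->
  tR phi z (Ytilde Y1 Y0 M1 M0 delta z (Lstar M1 M0 z mhat ord)) <= tR phi z (Y0oo Y0 M0).
Proof.
move=> mhat_ge; rewrite tR_Ytilde tR_Y0oo lerD2l lerN2.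
apply: sum_Dval_le; first exact: mstar_le_card.
by rewrite size_ord /mstar; lia.
Qed.

End Imputation.

Theorem theorem4 (R : realType) (n n1 n0 : nat)
  (Y1 Y0 : 'I_n -> R) (M1 M0 : 'I_n -> bool)
  (phi : nat -> R) (delta : 'I_n -> R) (alpha beta : R)
  (Mhat : {ffun 'I_n -> bool} -> {ffun 'I_n -> bool} -> ('I_n -> option R) -> int)
  (ordr : {ffun 'I_n -> bool} -> seq 'I_n) (y0 : 'I_n -> R) :
  (0 < n1)%N -> (0 < n0)%N -> (n1 + n0)%N = n ->
  (forall i, M0 i <= M1 i)%N ->
  {homo phi : a b / (a <= b)%N >-> a <= b} ->
  0 < alpha < 1 -> 0 < beta < alpha ->
  1 - beta <= prob n1 (fun z =>
     (\sum_(i < n) (M0 i : nat))%:Z <= Mhat z (Mobs M1 M0 z) (Yobs Y1 Y0 M1 M0 z)) ->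
  (forall z, perm_eq (ordr z) [seq i <- enum 'I_n | z i && Mobs M1 M0 z i]) ->
  (forall z, sorted (fun a b => Dval phi Y1 Y0 M1 M0 delta z a
                                <= Dval phi Y1 Y0 M1 M0 delta z b) (ordr z)) ->
  (forall i, Y1 i - Y0 i = delta i) ->
  prob n1 (fun z =>
    GR n1 phi y0
      (tR phi z (Ytilde Y1 Y0 M1 M0 delta z
         (Lstar M1 M0 z (Mhat z (Mobs M1 M0 z) (Yobs Y1 Y0 M1 M0 z)) (ordr z))))
    + beta <= alpha) <= alpha.
Proof.
move=> _ _ _ M0_le_M1 phi_homo _ /andP[_ beta_lt] good_prob ord_perm ord_sorted null.
set good := fun z => _ <= Mhat z _ _ in good_prob.
set T := fun a => tR phi a (Y0oo Y0 M0).
apply: (@le_trans _ _ (prob n1 (fun z => ~~ good z) +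
                      prob n1 (fun z => prob n1 (fun a => T z <= T a) <= alpha - beta))).
- apply: le_prob_or => z _ p_le; case good_z: (good z) => //=.
  rewrite -(GR_prob n1 phi y0) lerBrDr; apply: le_trans p_le; rewrite lerD2r.
  by apply: le_prob => a _; apply: le_trans; apply: tR_Ytilde_Lstar_le.
- have ab_ge0 : 0 <= alpha - beta by rewrite subr_ge0 ltW.
  have := prob_pvalue_le n1 T ab_ge0.
  have := prob_not (R := R) n1 good; lra.
Qed.
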